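(* Let $P$ be the symbol probability mass function of a stationary memoryless source over an alphabet of size $D\ge2$, with minimal mass $p_{\min}$. Let $\mathcal C$ be a Tunstall code with codewords of fixed length $m$ over an alphabet $\mathcal X$ ($|\mathcal X|\ge2$), corresponding to a Tunstall tree with $n$ leaves where $n\le|\mathcal X|^m<n+(D-1)$. For $\varepsilon>0$ let $d=d(m,\varepsilon):=\frac{m\varepsilon\ln|\mathcal X|}{1+\varepsilon}+\ln\big(1-\frac{D-1}{|\mathcal X|^m}\big)$ if $D>2$, and $d:=\frac{m\varepsilon\ln|\mathcal X|}{1+\varepsilon}$ if $D=2$, and suppose $d>0$. If $$p_{\min}\ge\frac{W_0(-e^{-d-1})}{W_{-1}(-e^{-d-1})},$$ then the compression rate $R$ of the Tunstall code satisfies $R\le(1+\varepsilon)H(P)$.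
   Context: $W_0$ and $W_{-1}$ are the principal and secondary real branches of the Lambert $W$ function ($W(u)e^{W(u)}=u$). A Tunstall tree with $n$ leaves is obtained from the root by repeatedly expanding a leaf of maximal probability into its $D$ children (a leaf reached by source symbols $s_1\cdots s_k$ has probability $\prod_jP(s_j)$); the Tunstall code parses the source sequence into the segments labelling the leaves and assigns to each leaf a distinct codeword of length $m$ over $\mathcal X$. The compression rate is $R:=\frac{m\log|\mathcal X|}{\mathbb E[\text{depth of the parsed leaf}]}$, the expected number of code letters (in the same logarithmic units as $H$) per source symbol, and $H(P)=-\sum_sP(s)\log P(s)$. *)

From Stdlib Require Import Reals Lra Lia List.
Import ListNotations.
Open Scope R_scope.

(* Source alphabet {0,...,D-1}; P : nat -> R gives the symbol probabilities
   (only indices < D matter). A word is a list of source symbols. *)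

Definition is_pmf (D : nat) (P : nat -> R) : Prop :=
  (forall s, (s < D)%nat -> 0 <= P s) /\
  fold_right Rplus 0 (map P (seq 0 D)) = 1.

Definition pmin (D : nat) (P : nat -> R) : R :=
  fold_right Rmin (P 0%nat) (map P (seq 0 D)).

Definition word_prob (P : nat -> R) (w : list nat) : R :=
  fold_right (fun s acc => P s * acc) 1 w.

(* Tunstall trees, represented by their list of leaves (words).
   Start from the root (empty word) and repeatedly expand a leaf of maximal
   probability into its D children. *)
Inductive tunstall_tree (D : nat) (P : nat -> R) : list (list nat) -> Prop :=
| tt_root : tunstall_tree D P [ [] ]
| tt_expand : forall T1 w T2,
    tunstall_tree D P (T1 ++ w :: T2) ->
    (forall v, In v (T1 ++ w :: T2) -> word_prob P v <= word_prob P w) ->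
    tunstall_tree D P (T1 ++ T2 ++ map (fun s => w ++ [s]) (seq 0 D)).

Definition expected_depth (P : nat -> R) (T : list (list nat)) : R :=
  fold_right Rplus 0 (map (fun w => word_prob P w * INR (length w)) T).

(* compression rate R = m log|X| / E[depth], natural logarithm *)
Definition compression_rate (P : nat -> R) (T : list (list nat))
  (m K : nat) : R :=
  INR m * ln (INR K) / expected_depth P T.

Definition entropy (D : nat) (P : nat -> R) : R :=
  - fold_right Rplus 0 (map (fun s => P s * ln (P s)) (seq 0 D)).

(* Lambert W branches, via their defining property: W(u) e^{W(u)} = u,
   principal branch W_0 >= -1, secondary branch W_{-1} <= -1. *)
Definition is_LambertW0 (u w : R) : Prop := w * exp w = u /\ -1 <= w.
Definition is_LambertWm1 (u w : R) : Prop := w * exp w = u /\ w <= -1.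

Definition d_param (D m K : nat) (eps : R) : R :=
  if Nat.ltb 2 D then
    INR m * eps * ln (INR K) / (1 + eps) + ln (1 - INR (D - 1) / INR (K ^ m))
  else INR m * eps * ln (INR K) / (1 + eps).

(* In a Tunstall tree every leaf probability lies in [[p_min q, q]], where [q]
   is the probability of the last expanded leaf. On that interval the convex
   function [x ln x] lies below its chord, and with [a = W_0/W_{-1} <= p_min]
   the chord has slope constant [W_0]; summing over the [n] leaves and
   optimising over the unknown [q] via [ln t <= t - 1] gives
   [sum_v p_v ln p_v <= d - ln n].  The left side is [- E[depth] H(P)], and
   [n >= |X|^m - (D - 1)] turns [ln n - d] into [m ln|X| / (1 + eps)]. *)
From Stdlib Require Import Reals List Lra Lia Psatz.
Import ListNotations.
Open Scope R_scope.

Notation sumR := (fold_right Rplus 0).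

Lemma sumR_app (l1 l2 : list R) : sumR (l1 ++ l2) = sumR l1 + sumR l2.
Proof. induction l1 as [|x l1 IH]; simpl; [lra | rewrite IH; lra]. Qed.

Section SumMap.
Context {A : Type}.

Lemma sumR_map_le (f g : A -> R) (l : list A) :
  (forall x, In x l -> f x <= g x) -> sumR (map f l) <= sumR (map g l).
Proof.
  induction l as [|x l IH]; intros Hfg; simpl; [lra|].
  assert (f x <= g x) by (apply Hfg; left; reflexivity).
  assert (sumR (map f l) <= sumR (map g l))
    by (apply IH; intros; apply Hfg; right; assumption).
  lra.
Qed.

Lemma sumR_map_plus (f g : A -> R) (l : list A) :
  sumR (map (fun x => f x + g x) l) = sumR (map f l) + sumR (map g l).
Proof. induction l as [|x l IH]; simpl; [lra | rewrite IH; lra]. Qed.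

Lemma sumR_map_scal (c : R) (f : A -> R) (l : list A) :
  sumR (map (fun x => c * f x) l) = c * sumR (map f l).
Proof. induction l as [|x l IH]; simpl; [lra | rewrite IH; lra]. Qed.

Lemma sumR_map_const (c : R) (l : list A) :
  sumR (map (fun _ => c) l) = INR (length l) * c.
Proof.
  induction l as [|x l IH]; cbn [map fold_right length]; [simpl; lra|].
  rewrite IH, S_INR; lra.
Qed.

Lemma sumR_map_nonneg (f : A -> R) (l : list A) :
  (forall x, In x l -> 0 <= f x) -> 0 <= sumR (map f l).
Proof.
  intros Hf.
  pose proof (sumR_map_le (fun _ => 0) f l Hf) as Hle.
  rewrite sumR_map_const in Hle; lra.
Qed.

Lemma sumR_map_in_le (f : A -> R) (l : list A) (y : A) :
  (forall x, In x l -> 0 <= f x) -> In y l -> f y <= sumR (map f l).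
Proof.
  induction l as [|x l IH]; intros Hf Hy; [contradiction|]. simpl.
  assert (Hl : forall z, In z l -> 0 <= f z) by (intros; apply Hf; right; assumption).
  destruct Hy as [<- | Hy].
  - pose proof (sumR_map_nonneg f l Hl); lra.
  - assert (0 <= f x) by (apply Hf; left; reflexivity).
    pose proof (IH Hl Hy); lra.
Qed.

Lemma sumR_map_expand (f : A -> R) (T1 T2 C : list A) (w : A) :
  sumR (map f (T1 ++ T2 ++ C)) = sumR (map f (T1 ++ w :: T2)) - f w + sumR (map f C).
Proof. rewrite !map_app, !sumR_app. simpl. lra. Qed.

Lemma in_expand (T1 T2 C : list A) (w v : A) :
  In v (T1 ++ T2 ++ C) -> In v (T1 ++ w :: T2) \/ In v C.
Proof.
  rewrite !in_app_iff. simpl. intros [H | [H | H]]; auto.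
Qed.

End SumMap.

Lemma ln_le (x y : R) : 0 < x -> x <= y -> ln x <= ln y.
Proof.
  intros Hx [Hxy | ->]; [left; apply ln_increasing; assumption | right; reflexivity].
Qed.

Lemma ln_le_sub_1 (x : R) : 0 < x -> ln x <= x - 1.
Proof. intros Hx. pose proof (exp_ineq1_le (ln x)). rewrite exp_ln in H by assumption. lra. Qed.

Lemma Rdiv_le_of_le_mul (a b c : R) : 0 <= b -> 0 <= c -> a <= b * c -> a / b <= c.
Proof.
  intros [Hb | <-] Hc Habc.
  - apply Rmult_le_reg_r with b; [assumption|].
    unfold Rdiv; rewrite Rmult_assoc, Rinv_l by lra. lra.
  - unfold Rdiv; rewrite Rinv_0, Rmult_0_r; assumption.
Qed.

(* [c (1 - a) = a ln a] says the line [(1 - y) c] through [(1, 0)] also passes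
   through [(a, a ln a)]: it is the chord of the convex [y ln y] on [[a, 1]]. *)
Lemma ylny_le_chord (a c y : R) :
  0 < a < 1 -> c * (1 - a) = a * ln a -> a <= y <= 1 -> y * ln y <= (1 - y) * c.
Proof.
  intros Ha Hc Hy.
  assert (Hlna : a * (ln a - ln y) >= a - y).
  { assert (Hya : y = (y / a) * a) by (field; lra).
    assert (ln y = ln (y / a) + ln a)
      by (rewrite Hya at 1; apply ln_mult; [apply Rdiv_lt_0_compat |]; lra).
    assert (ln (y / a) <= y / a - 1) by (apply ln_le_sub_1, Rdiv_lt_0_compat; lra).
    assert (a * (y / a - 1) = y - a) by (field; lra).
    nra. }
  assert (Hlny : ln y <= y - 1) by (apply ln_le_sub_1; lra).
  (* the two tangent-line bounds, weighted by [1 - y] and [y - a], sum to the claim *)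
  assert (Hkey : (1 - a) * (y * ln y) <= (1 - y) * (a * ln a)).
  { assert (0 <= (1 - y) * (a * (ln a - ln y) - (a - y))) by (apply Rmult_le_pos; lra).
    assert (0 <= (y - a) * ((y - 1) - ln y)) by (apply Rmult_le_pos; lra).
    nra. }
  rewrite <- Hc in Hkey. nra.
Qed.

Lemma xlnx_le_chord (a c q x : R) :
  0 < a < 1 -> c * (1 - a) = a * ln a -> 0 < q -> a * q <= x <= q ->
  x * ln x <= (q - x) * c + x * ln q.
Proof.
  intros Ha Hc Hq Hx.
  set (y := x / q).
  assert (Hxy : x = y * q) by (unfold y; field; lra).
  assert (Hy : a <= y <= 1).
  { split; apply Rmult_le_reg_r with q; lra. }
  pose proof (ylny_le_chord a c y Ha Hc Hy).
  rewrite Hxy, ln_mult by lra.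
  assert (q * (y * ln y) <= q * ((1 - y) * c)) by (apply Rmult_le_compat_l; lra).
  nra.
Qed.

(* The chord bound is summed, then [ln t <= t - 1] at [t = n q (-c)]
   eliminates the unknown scale [q]. *)
Lemma sum_xlnx_le_of_ratio (a c q : R) (xs : list R) :
  0 < a < 1 -> c * (1 - a) = a * ln a -> 0 < q -> sumR xs = 1 ->
  (forall x, In x xs -> a * q <= x <= q) ->
  sumR (map (fun x => x * ln x) xs) <= - ln (INR (length xs)) - ln (- c) - 1 - c.
Proof.
  intros Ha Hc Hq Hsum Hxs.
  assert (Hc0 : c < 0).
  { assert (ln a < 0) by (rewrite <- ln_1; apply ln_increasing; lra). nra. }
  assert (Hn : 0 < INR (length xs)).
  { destruct xs as [|x xs]; [simpl in Hsum; lra|].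
    apply lt_0_INR; simpl; lia. }
  set (n := INR (length xs)) in *.
  assert (Hchord : sumR (map (fun x => x * ln x) xs) <= n * (q * c) + (ln q - c)).
  { apply Rle_trans with (sumR (map (fun x => q * c + (ln q - c) * x) xs)).
    - apply sumR_map_le. intros x Hx.
      pose proof (xlnx_le_chord a c q x Ha Hc Hq (Hxs x Hx)). lra.
    - rewrite sumR_map_plus, sumR_map_const, (sumR_map_scal (ln q - c) id), map_id, Hsum.
      fold n. lra. }
  assert (Hln : ln (n * q * - c) <= n * q * - c - 1)
    by (apply ln_le_sub_1; apply Rmult_lt_0_compat; [apply Rmult_lt_0_compat |]; lra).
  rewrite !ln_mult in Hln by (try apply Rmult_lt_0_compat; lra).
  nra.
Qed.

Lemma LambertW_ln (w c : R) : w * exp w = - exp c -> w < 0 /\ ln (- w) + w = c.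
Proof.
  intros Hw.
  pose proof (exp_pos c). pose proof (exp_pos w).
  assert (Hneg : w < 0) by nra.
  split; [assumption|].
  rewrite <- (ln_exp w) at 2. rewrite <- ln_mult by lra.
  replace (- w * exp w) with (exp c) by lra. apply ln_exp.
Qed.

(* Away from the branch point [-1/e] the two real branches differ, and then
   [a = W_0 / W_{-1}] is exactly the ratio for which [W_0] is the slope
   constant of [ylny_le_chord]. *)
Lemma LambertW_branches_chord (c w0 wm1 : R) :
  c < -1 -> is_LambertW0 (- exp c) w0 -> is_LambertWm1 (- exp c) wm1 ->
  ln (- w0) + w0 = c /\ 0 < w0 / wm1 < 1 /\
  w0 * (1 - w0 / wm1) = w0 / wm1 * ln (w0 / wm1).
Proof.
  intros Hc [Hw0 Hw0ge] [Hwm1 Hwm1le].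
  destruct (LambertW_ln w0 c Hw0) as [Hw0neg Hln0].
  destruct (LambertW_ln wm1 c Hwm1) as [Hwm1neg Hlnm1].
  assert (Hlt : wm1 < w0).
  { destruct (Rlt_or_le wm1 w0) as [|Hle]; [assumption|].
    assert (w0 = -1) by lra. subst w0.
    replace (- -1) with 1 in Hln0 by lra. rewrite ln_1 in Hln0. lra. }
  assert (Hratio : - w0 = w0 / wm1 * - wm1) by (field; lra).
  assert (Ha : 0 < w0 / wm1 < 1).
  { split; apply Rmult_lt_reg_r with (- wm1); lra. }
  assert (Hlna : ln (w0 / wm1) = wm1 - w0).
  { assert (ln (- w0) = ln (w0 / wm1) + ln (- wm1)) by (rewrite Hratio; apply ln_mult; lra).
    lra. }
  repeat split; try lra.
  rewrite Hlna. field. lra.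
Qed.

Lemma ln_codebook_le_ln_leaves_sub_d_param (D m K n : nat) (eps : R) :
  (0 < K)%nat -> 0 < 1 + eps -> (K ^ m < n + (D - 1))%nat -> (D - 1 < K ^ m)%nat ->
  INR m * ln (INR K) <= (1 + eps) * (ln (INR n) - d_param D m K eps).
Proof.
  intros HK Heps Hn HDK.
  assert (HN0 : 0 < INR (K ^ m)) by (apply lt_0_INR; lia).
  assert (HlnN : ln (INR (K ^ m)) = INR m * ln (INR K))
    by (rewrite pow_INR; apply ln_pow, lt_0_INR; assumption).
  assert (Hsplit : (1 + eps) * (INR m * eps * ln (INR K) / (1 + eps))
                   = eps * (INR m * ln (INR K))) by (field; lra).
  unfold d_param. destruct (Nat.ltb_spec 2 D).
  - set (r := INR (D - 1)) in *.
    assert (Hr : r < INR (K ^ m)) by (apply lt_INR; assumption).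
    assert (Hle : INR (K ^ m) - r <= INR n)
      by (unfold r; rewrite <- minus_INR by lia; apply le_INR; lia).
    assert (Hfac : INR (K ^ m) - r = (1 - r / INR (K ^ m)) * INR (K ^ m)) by (field; lra).
    assert (Hpos : 0 < 1 - r / INR (K ^ m)).
    { apply Rmult_lt_reg_r with (INR (K ^ m)); [assumption|]. rewrite <- Hfac. lra. }
    assert (Hln : ln (1 - r / INR (K ^ m)) + ln (INR (K ^ m)) <= ln (INR n)).
    { rewrite <- ln_mult, <- Hfac by assumption. apply ln_le; lra. }
    nra.
  - assert (ln (INR (K ^ m)) <= ln (INR n)) by (apply ln_le, le_INR; [assumption | lia]).
    nra.
Qed.

Section TunstallTree.
Variables (D : nat) (P : nat -> R).
Hypothesis HP : is_pmf D P.

Lemma pmf_dim_pos : (0 < D)%nat.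
Proof. destruct D; [destruct HP as [_ H]; simpl in H; lra | lia]. Qed.

Lemma pmf_le_1 (s : nat) : (s < D)%nat -> P s <= 1.
Proof.
  intros Hs. destruct HP as [Hnn <-].
  apply sumR_map_in_le; [intros x Hx; apply Hnn, (in_seq D 0 x), Hx |].
  apply in_seq; lia.
Qed.

Lemma pmin_le (s : nat) : (s < D)%nat -> pmin D P <= P s.
Proof.
  intros Hs. unfold pmin.
  assert (Hin : In (P s) (map P (seq 0 D))) by (apply in_map, in_seq; lia).
  induction (map P (seq 0 D)) as [|x l IH]; [contradiction|].
  destruct Hin as [<- | Hin]; simpl; [apply Rmin_l | eapply Rle_trans; [apply Rmin_r | auto]].
Qed.

Lemma word_prob_snoc (w : list nat) (s : nat) :
  word_prob P (w ++ [s]) = word_prob P w * P s.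
Proof. induction w as [|x w IH]; simpl; [ring | rewrite IH; ring]. Qed.

Lemma tunstall_leaf_prob_sum (T : list (list nat)) :
  tunstall_tree D P T -> sumR (map (word_prob P) T) = 1.
Proof.
  induction 1 as [|T1 w T2 _ IH _]; [simpl; lra|].
  rewrite (sumR_map_expand _ _ _ _ w), IH, map_map.
  rewrite (map_ext _ (fun s => word_prob P w * P s)) by (intros; apply word_prob_snoc).
  rewrite sumR_map_scal, (proj2 HP). ring.
Qed.

Hypothesis Hpmin : 0 < pmin D P.

(* The witness [q] is the probability of the last expanded leaf. *)
Lemma tunstall_leaf_prob_ratio (T : list (list nat)) :
  tunstall_tree D P T ->
  exists q, 0 < q /\ forall v, In v T -> pmin D P * q <= word_prob P v <= q.
Proof.
  induction 1 as [|T1 w T2 HT [q [Hq Hbound]] Hmax].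
  - exists 1. split; [lra|]. intros v [<- | []]. simpl.
    pose proof pmf_dim_pos. pose proof (pmin_le 0 ltac:(lia)).
    pose proof (pmf_le_1 0 ltac:(lia)). lra.
  - assert (Hw : In w (T1 ++ w :: T2)) by (apply in_or_app; right; left; reflexivity).
    destruct (Hbound w Hw) as [Hwlo Hwhi].
    assert (Hwpos : 0 < word_prob P w) by nra.
    exists (word_prob P w). split; [assumption|].
    intros v Hv. destruct (in_expand _ _ _ w v Hv) as [Hold | Hchild].
    + destruct (Hbound v Hold). split; [|apply Hmax, Hold].
      assert (pmin D P * word_prob P w <= pmin D P * q) by (apply Rmult_le_compat_l; lra).
      lra.
    + apply in_map_iff in Hchild as [s [<- Hs]]. apply in_seq in Hs.
      rewrite word_prob_snoc.
      pose proof (pmin_le s ltac:(lia)). pose proof (pmf_le_1 s ltac:(lia)).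
      split; nra.
Qed.

Lemma tunstall_leaf_prob_pos (T : list (list nat)) (v : list nat) :
  tunstall_tree D P T -> In v T -> 0 < word_prob P v.
Proof.
  intros HT Hv. destruct (tunstall_leaf_prob_ratio T HT) as [q [Hq Hbound]].
  destruct (Hbound v Hv). nra.
Qed.

Lemma tunstall_leaf_entropy (T : list (list nat)) :
  tunstall_tree D P T ->
  sumR (map (fun v => word_prob P v * ln (word_prob P v)) T)
  = - expected_depth P T * entropy D P.
Proof.
  unfold expected_depth, entropy.
  induction 1 as [|T1 w T2 HT IH _]; [simpl; rewrite ln_1; lra|].
  assert (Hw : 0 < word_prob P w)
    by (apply (tunstall_leaf_prob_pos _ _ HT), in_or_app; right; left; reflexivity).
  set (children := map (fun s => w ++ [s]) (seq 0 D)).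
  assert (Hxlnx : sumR (map (fun v => word_prob P v * ln (word_prob P v)) children)
                  = word_prob P w * ln (word_prob P w)
                    + word_prob P w * sumR (map (fun s => P s * ln (P s)) (seq 0 D))).
  { unfold children. rewrite map_map.
    rewrite (map_ext_in _ (fun s => (word_prob P w * ln (word_prob P w)) * P s
                                     + word_prob P w * (P s * ln (P s)))).
    - rewrite sumR_map_plus, !sumR_map_scal, (proj2 HP). ring.
    - intros s Hs. apply in_seq in Hs. pose proof (pmin_le s ltac:(lia)).
      rewrite word_prob_snoc, ln_mult by lra. ring. }
  assert (Hdepth : sumR (map (fun v => word_prob P v * INR (length v)) children)
                   = word_prob P w * INR (length w) + word_prob P w).
  { unfold children. rewrite map_map.
    rewrite (map_ext _ (fun s => (word_prob P w * INR (length w) + word_prob P w) * P s)).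
    - rewrite sumR_map_scal, (proj2 HP). ring.
    - intros s. rewrite word_prob_snoc, length_app, plus_INR. simpl. ring. }
  rewrite !(sumR_map_expand _ _ _ _ w), Hxlnx, Hdepth, IH. ring.
Qed.

Lemma entropy_nonneg : 0 <= entropy D P.
Proof.
  unfold entropy.
  assert (Hle : sumR (map (fun s => P s * ln (P s)) (seq 0 D))
                <= sumR (map (fun _ => 0) (seq 0 D))).
  { apply sumR_map_le. intros s Hs. apply in_seq in Hs.
    pose proof (pmin_le s ltac:(lia)). pose proof (pmf_le_1 s ltac:(lia)).
    assert (ln (P s) <= 0) by (rewrite <- ln_1; apply ln_le; lra). nra. }
  rewrite sumR_map_const in Hle. lra.
Qed.

Lemma tunstall_expected_depth_nonneg (T : list (list nat)) :
  tunstall_tree D P T -> 0 <= expected_depth P T.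
Proof.
  intros HT. apply sumR_map_nonneg. intros v Hv.
  apply Rmult_le_pos; [left; apply (tunstall_leaf_prob_pos T v HT Hv) | apply pos_INR].
Qed.

End TunstallTree.

Theorem theorem15 (D : nat) (P : nat -> R) (K m : nat) (T : list (list nat))
  (eps w0 wm1 : R) :
  (2 <= D)%nat ->
  is_pmf D P ->
  (2 <= K)%nat ->
  tunstall_tree D P T ->
  (length T <= K ^ m)%nat ->
  (K ^ m < length T + (D - 1))%nat ->
  0 < eps ->
  (D - 1 < K ^ m)%nat ->
  0 < d_param D m K eps ->
  is_LambertW0 (- exp (- d_param D m K eps - 1)) w0 ->
  is_LambertWm1 (- exp (- d_param D m K eps - 1)) wm1 ->
  pmin D P >= w0 / wm1 ->
  compression_rate P T m K <= (1 + eps) * entropy D P.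
Proof.
  intros _ HP HK HT _ Hlen Heps HDK Hd HW0 HWm1 Hpmin.
  destruct (LambertW_branches_chord (- d_param D m K eps - 1) w0 wm1 ltac:(lra) HW0 HWm1)
    as [Hlnw0 [Ha Hchord]].
  assert (Hpmin_pos : 0 < pmin D P) by lra.
  destruct (tunstall_leaf_prob_ratio D P HP Hpmin_pos T HT) as [q [Hq Hleaves]].
  assert (Hratio : forall x, In x (map (word_prob P) T) -> w0 / wm1 * q <= x <= q).
  { intros x Hx. apply in_map_iff in Hx as [v [<- Hv]].
    destruct (Hleaves v Hv).
    assert (w0 / wm1 * q <= pmin D P * q) by (apply Rmult_le_compat_r; lra).
    lra. }
  assert (Hxlnx := sum_xlnx_le_of_ratio (w0 / wm1) w0 q _ Ha Hchord Hq
                     (tunstall_leaf_prob_sum D P HP T HT) Hratio).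
  rewrite map_map, length_map, (tunstall_leaf_entropy D P HP Hpmin_pos T HT) in Hxlnx.
  assert (Hlnn := ln_codebook_le_ln_leaves_sub_d_param D m K (length T) eps
                   ltac:(lia) ltac:(lra) Hlen HDK).
  pose proof (entropy_nonneg D P HP Hpmin_pos).
  pose proof (tunstall_expected_depth_nonneg D P HP Hpmin_pos T HT).
  apply Rdiv_le_of_le_mul; [assumption | nra | nra].
Qed.
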